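(* Let $G$ be a connected graph on at least three vertices that has no pair of open twins of degree $1$ (i.e., no two distinct leaves adjacent to the same vertex). Then $G$ admits a minimum-size locating-dominating set $S$ containing no leaf of $G$.
   Context: All graphs are finite and simple. For a vertex $v$, $N(v)$ is its open neighbourhood and $N[v]=N(v)\cup\{v\}$. For $S\subseteq V(G)$, $I(v)=N[v]\cap S$. A set $S\subseteq V(G)$ is locating-dominating if every vertex $v$ has $I(v)\neq\emptyset$ and $I(u)\neq I(v)$ for all distinct $u,v\in V(G)\setminus S$. Two distinct vertices $u,v$ are open twins if $N(u)=N(v)$; they are open twins of degree $d$ if moreover $|N(u)|=d$. A leaf is a vertex of degree $1$. *)

From mathcomp Require Import all_boot.
Set Implicit Arguments. Unset Strict Implicit. Unset Printing Implicit Defensive.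

Definition simple_graph (T : finType) (e : rel T) : Prop :=
  symmetric e /\ irreflexive e.

Definition onbhd (T : finType) (e : rel T) (v : T) : {set T} := [set u | e v u].
Definition cnbhd (T : finType) (e : rel T) (v : T) : {set T} := v |: onbhd e v.

Definition ident (T : finType) (e : rel T) (S : {set T}) (v : T) : {set T} :=
  cnbhd e v :&: S.

Definition locating_dominating (T : finType) (e : rel T) (S : {set T}) : Prop :=
  (forall v : T, ident e S v != set0) /\
  (forall u v : T, u \notin S -> v \notin S -> u != v -> ident e S u != ident e S v).

Definition min_locating_dominating (T : finType) (e : rel T) (S : {set T}) : Prop :=
  locating_dominating e S /\
  forall S' : {set T}, locating_dominating e S' -> #|S| <= #|S'|.

Definition is_leaf (T : finType) (e : rel T) (v : T) : bool := #|onbhd e v| == 1.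

Definition open_twins_deg (T : finType) (e : rel T) (d : nat) (u v : T) : Prop :=
  u != v /\ onbhd e u = onbhd e v /\ #|onbhd e u| = d.

Definition connected_graph (T : finType) (e : rel T) : Prop :=
  forall x y : T, connect e x y.

From mathcomp Require Import all_boot.
From mathcomp Require Import zify.
Set Implicit Arguments. Unset Strict Implicit. Unset Printing Implicit Defensive.

(* Among the minimum locating-dominating sets choose one, S, with the fewest
   leaves. If a leaf l with neighbour w lay in S, replace l by w when w is not
   in S, and otherwise by the unique vertex x outside S with I(x) = {w}, if any.
   The result is again a minimum locating-dominating set. Since w is not a leaf
   (connectedness and |V| >= 3) and x is not a leaf (it would be an open twin
   of degree 1 of l), it has fewer leaves than S: a contradiction. *)

Section LocatingDominating.
Variables (T : finType) (e : rel T).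
Hypothesis sym : symmetric e.
Hypothesis irr : irreflexive e.

Definition locating_dominatingb (S : {set T}) : bool :=
  [forall v, ident e S v != set0] &&
  [forall u, forall v,
     [&& u \notin S, v \notin S & u != v] ==> (ident e S u != ident e S v)].

Lemma locating_dominatingP S : reflect (locating_dominating e S) (locating_dominatingb S).
Proof.
apply: (iffP andP) => [[/forallP dom /forallP sep]|[dom sep]]; split => //.
- by move=> u v uS vS uv; move/forallP/(_ v): (sep u); rewrite uS vS uv; apply.
- exact/forallP.
- apply/forallP => u; apply/forallP => v; apply/implyP => /and3P[uS vS uv].
  exact: sep.
Qed.

Lemma locating_dominating_setT : locating_dominating e setT.
Proof.
split=> [v|u v]; last by rewrite inE.
by apply/set0Pn; exists v; rewrite !inE eqxx.
Qed.

Definition leaf_count (S : {set T}) : nat := #|[set v in S | is_leaf e v]|.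

Lemma in_cnbhd u x : (x \in cnbhd e u) = (x == u) || e u x.
Proof. by rewrite !inE. Qed.

Lemma leaf_adj l w : onbhd e l = [set w] -> e l w.
Proof. by move=> Nl; have := set11 w; rewrite -Nl inE. Qed.

Lemma leaf_notin_cnbhd l w u :
  onbhd e l = [set w] -> u != l -> u != w -> l \notin cnbhd e u.
Proof.
move=> Nl ul uw; rewrite in_cnbhd eq_sym (negbTE ul) /= sym.
apply/negP => elu; have : u \in onbhd e l by rewrite inE.
by rewrite Nl inE (negbTE uw).
Qed.

Lemma leaf_neighbour_not_leaf l w :
  connected_graph e -> 3 <= #|T| -> onbhd e l = [set w] -> ~~ is_leaf e w.
Proof.
move=> conn T3 Nl; apply/negP => /cards1P[z Nw].
have lz : l = z by apply/set1P; rewrite -Nw inE sym leaf_adj.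
subst z.
(* {l, w} would be a connected component, yet the graph has a third vertex. *)
have closed_lw : closed e [set l; w].
  suff in_lw x y : e x y -> x \in [set l; w] -> y \in [set l; w].
    by move=> x y exy; apply/idP/idP; apply: in_lw; rewrite // sym.
  move=> exy; rewrite !inE => /orP[]/eqP Ex; subst x.
  - have : y \in onbhd e l by rewrite inE.
    by rewrite Nl inE => ->; rewrite orbT.
  - have : y \in onbhd e w by rewrite inE.
    by rewrite Nw inE => ->.
have [z z_out] : exists z, z \notin [set l; w].
  apply/existsP; rewrite -negb_forall; apply/negP => /forallP lw_all.
  have : #|T| <= #|[set l; w]|.
    by rewrite -cardsT; apply/subset_leq_card/subsetP => x _; apply: lw_all.
  have : #|[set l; w]| <= 2 by rewrite cards2; case: (l != w).
  lia.
by move: z_out; rewrite -(closed_connect closed_lw (conn l z)) !inE eqxx.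
Qed.

Section LeafSwap.
Variables (S : {set T}) (l w : T).
Hypotheses (ldS : locating_dominating e S) (lS : l \in S) (Nl : onbhd e l = [set w]).

(* When w is in S, at most one vertex outside S has I(x) = {w}; when it is not,
   the second disjunct is void and only w itself enters. *)
Let Y := [set x | (x \notin S) && ((x == w) || (ident e S x == [set w]))].
Let S' := (S :\ l) :|: Y.

Let lw : l != w.
Proof. by apply: contraTneq (leaf_adj Nl) => ->; rewrite irr. Qed.

Let w_in_swap : w \in S'.
Proof.
rewrite /S' /Y; case wS: (w \in S); first by rewrite !inE eq_sym lw wS.
by rewrite !inE wS eqxx andbF.
Qed.

Let l_notin_swap : l \notin S'.
Proof. by rewrite /S' /Y !inE eqxx lS. Qed.

Let outside_swap z : z \notin S' -> z != l -> z \notin S.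
Proof. by rewrite /S' !inE negb_or => /andP[+ _] zl; rewrite zl. Qed.

Let ident_swap_leaf : ident e S' l = [set w].
Proof.
apply/setP => x; rewrite /ident /cnbhd Nl in_setI in_setU1 !in_set1.
case: (x =P l) => [->|_] /=; first by rewrite (negbTE l_notin_swap) (negbTE lw).
by case: (x =P w) => [->|].
Qed.

Let ident_swap_other u :
  u != l -> u != w -> ident e S' u :&: S = ident e S u.
Proof.
move=> ul uw; have /negbTE lu := leaf_notin_cnbhd Nl ul uw.
apply/setP => x; rewrite /ident !in_setI.
case xS: (x \in S); rewrite ?andbF ?andbT //=.
by case: (x =P l) => [->|/eqP xl]; rewrite ?lu // /S' !inE xl xS /= andbT.
Qed.

Let card_Y : #|Y| <= 1.
Proof.
have [_ sep] := ldS.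
apply/card_le1_eqP => a b; rewrite !inE => /andP[aS Ha] /andP[bS Hb].
case wS: (w \in S).
  have ident_w x : x \notin S -> (x == w) || (ident e S x == [set w]) ->
      ident e S x = [set w].
    by move=> xS /orP[/eqP xw|/eqP //]; rewrite xw wS in xS.
  apply/eqP; apply: contraT => ba; move: (sep b a bS aS ba).
  by rewrite (ident_w a aS Ha) (ident_w b bS Hb) eqxx.
have only_w x : (x == w) || (ident e S x == [set w]) -> x = w.
  case/orP=> [/eqP //|/eqP Ix].
  by have := set11 w; rewrite -Ix !inE wS andbF.
by rewrite (only_w a Ha) (only_w b Hb).
Qed.

Let card_swap : #|S'| <= #|S|.
Proof. by rewrite cardsU (cardsD1 l S) lS; have := card_Y; lia. Qed.

Let swap_separates_leaf x : x \notin S' -> x != l -> ident e S' l != ident e S' x.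
Proof.
have [dom _] := ldS.
move=> xS' xl; rewrite ident_swap_leaf; apply/negP => /eqP Ix.
have xw : x != w by apply: contraNneq xS' => ->.
have xS := outside_swap xS' xl.
have IxS := ident_swap_other xl xw; rewrite -Ix in IxS.
case wS: (w \in S).
  have xY : x \in Y.
    rewrite inE xS -IxS; apply/orP; right; apply/eqP/setP => y.
    by rewrite !inE; case: (y =P w) => [->|].
  by move: xS'; rewrite /S' in_setU xY orbT.
move: (dom x); rewrite -IxS.
suff -> : [set w] :&: S = set0 by rewrite eqxx.
by apply/setP => y; rewrite !inE; case: (y =P w) => [->|].
Qed.

Let ld_swap : locating_dominating e S'.
Proof.
have [dom sep] := ldS.
split=> [v|u v uS' vS' uv].
- case: (v =P l) => [->|/eqP vl].
    by rewrite ident_swap_leaf; apply/set0Pn; exists w; rewrite set11.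
  case: (v =P w) => [->|/eqP vw].
    by apply/set0Pn; exists w; rewrite /ident /cnbhd in_setI in_setU1 eqxx w_in_swap.
  by apply: contra (dom v) => /eqP I0; rewrite -(ident_swap_other vl vw) I0 set0I.
- case: (u =P l) => [ul|/eqP ul].
    by subst u; apply: swap_separates_leaf => //; rewrite eq_sym.
  case: (v =P l) => [vl|/eqP vl].
    by subst v; rewrite eq_sym; apply: swap_separates_leaf.
  have uw : u != w by apply: contraNneq uS' => ->.
  have vw : v != w by apply: contraNneq vS' => ->.
  apply: contra (sep u v (outside_swap uS' ul) (outside_swap vS' vl) uv) => /eqP Iuv.
  by rewrite -(ident_swap_other ul uw) -(ident_swap_other vl vw) Iuv.
Qed.

Hypotheses (no_twins : forall u v : T, ~ open_twins_deg e 1 u v)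
           (w_not_leaf : ~~ is_leaf e w).

Let Y_no_leaf x : x \in Y -> ~~ is_leaf e x.
Proof.
rewrite inE => /andP[xS /orP[/eqP -> //|/eqP Ix]]; apply/negP => /cards1P[z Nx].
have wIx : w \in ident e S x by rewrite Ix set11.
have exw : e x w.
  move: wIx; rewrite !inE => /andP[/orP[/eqP wx|//] wS].
  by rewrite -wx wS in xS.
have wz : w = z by apply/set1P; rewrite -Nx inE.
subst z; apply: (@no_twins x l); split; last split.
- by apply: contraNneq xS => ->.
- by rewrite Nx Nl.
- by rewrite Nx cards1.
Qed.

Let leaf_count_swap : leaf_count S' < leaf_count S.
Proof.
have sub : [set v in S' | is_leaf e v] \subset [set v in S | is_leaf e v] :\ l.
  apply/subsetP => v; rewrite inE /S' in_setU => /andP[/orP[vSl|vY] lv].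
    by move: vSl; rewrite !inE lv andbT.
  by move: (Y_no_leaf vY); rewrite lv.
have := subset_leq_card sub.
have leaf_l : l \in [set v in S | is_leaf e v] by rewrite inE lS /is_leaf Nl cards1.
by rewrite /leaf_count (cardsD1 l [set v in S | is_leaf e v]) leaf_l; lia.
Qed.

Lemma leaf_swap :
  exists S2, [/\ locating_dominating e S2, #|S2| <= #|S| & leaf_count S2 < leaf_count S].
Proof. by exists S'. Qed.

End LeafSwap.

End LocatingDominating.

Theorem lemma2 (T : finType) (e : rel T) :
  simple_graph e ->
  connected_graph e ->
  3 <= #|T| ->
  (forall u v : T, ~ open_twins_deg e 1 u v) ->
  exists S : {set T},
    min_locating_dominating e S /\ (forall v : T, v \in S -> ~~ is_leaf e v).
Proof.
move=> [sym irr] conn T3 no_twins.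
have ldT : locating_dominatingb e setT.
  exact/locating_dominatingP/locating_dominating_setT.
have [S0 /locating_dominatingP ld0 min0] := arg_minnP (fun S : {set T} => #|S|) ldT.
have {}min0 S : locating_dominating e S -> #|S0| <= #|S|.
  by move/locating_dominatingP; apply: min0.
have ld0' : locating_dominatingb e S0 && (#|S0| == #|S0|).
  by rewrite eqxx andbT; apply/locating_dominatingP.
have [S1 /andP[/locating_dominatingP ld1 /eqP S1S0] min1] :=
  @arg_minnP _ S0 (fun S => locating_dominatingb e S && (#|S| == #|S0|)) (leaf_count e) ld0'.
exists S1; split; first by split=> // S' /min0; rewrite S1S0.
move=> l lS1; apply/negP => /cards1P[w Nl].
have [S2 [ld2 S2S1 fewer]] :=
  leaf_swap sym irr ld1 lS1 Nl no_twins (leaf_neighbour_not_leaf sym conn T3 Nl).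
suff : leaf_count e S1 <= leaf_count e S2 by lia.
apply: min1; apply/andP; split; first exact/locating_dominatingP.
by apply/eqP; have := min0 S2 ld2; lia.
Qed.
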